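(* Let $(N,\langle\cdot,\cdot\rangle,\varphi)$ be a modified $H$-type group (see context). The metric $\langle\cdot,\cdot\rangle$ is a nilsoliton if and only if the derived algebra $[\mathfrak v,\mathfrak v]$ is contained in a single eigenspace of $\mathrm{Rc}|_{\mathfrak z}$.
   Context: Let $N$ be a 2-step nilpotent real Lie group with Lie algebra $\mathfrak n$, Lie bracket $[\cdot,\cdot]$ and center $\mathfrak z$, endowed with a left-invariant pseudo-Riemannian metric $\langle\cdot,\cdot\rangle$ for which $\mathfrak z$ is nondegenerate. Put $\mathfrak v=\mathfrak z^\perp$. For $z\in\mathfrak z$ define $j(z)\in\mathrm{End}(\mathfrak v)$ by $\langle [x,y],z\rangle=\langle y,j(z)x\rangle$ for all $x,y\in\mathfrak v$. Given a quadratic form $\varphi$ on $\mathfrak z$, $(N,\langle\cdot,\cdot\rangle,\varphi)$ is a modified $H$-type group if $j(z)^2=-\varphi(z)\,\mathrm{Id}_{\mathfrak v}$ for all $z\in\mathfrak z$. The Ricci operator $\mathrm{Rc}:\mathfrak n\to\mathfrak n$ is defined by $\langle\mathrm{Rc}\,u,w\rangle=\mathrm{Ric}(u,w)$; it maps $\mathfrak z$ to $\mathfrak z$. The metric is a nilsoliton if there is a constant $c\in\mathbb R$ such that $D=\mathrm{Rc}+c\,\mathrm{Id}_{\mathfrak n}$ is a derivation of $\mathfrak n$, i.e. $D[u,w]=[Du,w]+[u,Dw]$ for all $u,w\in\mathfrak n$. *)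

(* The Lie algebra n is modelled as R^n = 'rV[R]_n with an
   abstract bracket; the left-invariant metric is a symmetric invertible
   Gram matrix g.  All curvature notions of the left-invariant metric are
   computed algebraically on the Lie algebra (Koszul formula). *)
From HB Require Import structures.
From mathcomp Require Import all_boot all_order all_algebra.
From mathcomp Require Import reals.
Set Implicit Arguments. Unset Strict Implicit. Unset Printing Implicit Defensive.
Import Order.TTheory GRing.Theory Num.Theory.
Local Open Scope ring_scope.

Section Defs.
Variables (R : fieldType) (n : nat).
Implicit Types (g : 'M[R]_n) (x y z u w : 'rV[R]_n).
Variable br : 'rV[R]_n -> 'rV[R]_n -> 'rV[R]_n.

(* the (possibly indefinite) inner product <x,y> = x g y^T *)
Definition ip g x y : R := (x *m g *m y^T) 0 0.

Definition ev (i : 'I_n) : 'rV[R]_n := delta_mx 0 i.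

Definition riesz g (f : 'rV[R]_n -> R) : 'rV[R]_n :=
  (\row_i f (ev i)) *m invmx g.

Definition two_step_nilpotent : Prop :=
  [/\ (forall a x y z, br (a *: x + y) z = a *: br x z + br y z),
      (forall x y, br x y = - br y x),
      (forall x y z, br (br x y) z = 0) &
      (exists x y, br x y != 0)].

Definition center z : Prop := forall x, br z x = 0.

Definition vpart g x : Prop := forall z, center z -> ip g x z = 0.

Definition center_nondeg g : Prop :=
  forall z, center z -> (forall w, center w -> ip g z w = 0) -> z = 0.

(* Levi-Civita connection of the left-invariant metric (Koszul formula):
   <nabla_x y, w> = 1/2 (<[x,y],w> - <[y,w],x> + <[w,x],y>) *)
Definition nabla g x y : 'rV[R]_n :=
  riesz g (fun w => 2^-1 * (ip g (br x y) w - ip g (br y w) x + ip g (br w x) y)).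

Definition curv g x y z : 'rV[R]_n :=
  nabla g x (nabla g y z) - nabla g y (nabla g x z) - nabla g (br x y) z.

Definition ric g y z : R := \sum_(i < n) (curv g (ev i) y z) 0 i.

Definition Rc g u : 'rV[R]_n := riesz g (fun w => ric g u w).

Definition derivation (D : 'rV[R]_n -> 'rV[R]_n) : Prop :=
  forall u w, D (br u w) = br (D u) w + br u (D w).

Definition nilsoliton g : Prop :=
  exists c : R, derivation (fun u => Rc g u + c *: u).

(* quadratic form on R^n given by a matrix Q (restricted to z in the statement) *)
Definition qform (Q : 'M[R]_n) z : R := (z *m Q *m z^T) 0 0.

End Defs.

From HB Require Import structures.
From mathcomp Require Import all_boot all_order all_algebra.
From mathcomp Require Import reals ring.
Set Implicit Arguments. Unset Strict Implicit. Unset Printing Implicit Defensive.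
Import Order.TTheory GRing.Theory Num.Theory.
Local Open Scope ring_scope.

(* Split n = z (+) v orthogonally and let [jmap a b] be j(a_z) b_v, so that the
   Koszul formula reads nabla_x y = ([x,y] - j(x) y - j(y) x) / 2.  Computing
   the curvature block by block and taking traces, Ric vanishes on z x v and
   v x z, while on v x v it is -1/4 of the trace of x |-> [u, j(x) w] +
   [w, j(x) u].  Polarizing j(z)^2 = - phi(z) gives j(c) j(c') + j(c') j(c) =
   - phi(c, c'), whence [u, j(x) w] + [w, j(x) u] = <u, w> q(x) for a vector
   q(x) of z: so Rc = lambda Id on v, and Rc also preserves z.  Therefore
   D = Rc + c Id satisfies [D u, w] + [u, D w] = 2 (lambda + c) [u, w], and D is
   a derivation iff Rc = (2 lambda + c) Id on [v, v]. *)

Lemma linear_comp (R : pzRingType) (U V W : lmodType R) (f : V -> W) (h : U -> V) :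
  linear f -> linear h -> linear (fun x => f (h x)).
Proof. by move=> hf hh k x y; rewrite hh hf. Qed.

Section LinearMaps.
Variables (R : fieldType) (m n : nat).

Definition pack_linear (f : 'rV[R]_m -> 'rV[R]_n) (hf : linear f) :
  {linear 'rV[R]_m -> 'rV[R]_n} := HB.pack f (GRing.isLinear.Build R _ _ _ f hf).

Variables (f : 'rV[R]_m -> 'rV[R]_n) (hf : linear f).

Lemma linear_fun0 : f 0 = 0. Proof. exact: (linear0 (pack_linear hf)). Qed.
Lemma linear_funD : {morph f : x y / x + y}. Proof. exact: (linearD (pack_linear hf)). Qed.
Lemma linear_funB : {morph f : x y / x - y}. Proof. exact: (linearB (pack_linear hf)). Qed.
Lemma linear_funZ a : {morph f : x / a *: x}. Proof. exact: (linearZ_LR (pack_linear hf)). Qed.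
Lemma mul_rV_lin1_fun u : u *m lin1_mx f = f u.
Proof. exact: (mul_rV_lin1 (pack_linear hf)). Qed.

End LinearMaps.

Section Trace.
Variables (R : fieldType) (n : nat).
Implicit Types (L : 'rV[R]_n -> 'rV[R]_n).

Definition lintr L := \tr (lin1_mx L).

Lemma eq_lintr L1 L2 : L1 =1 L2 -> lintr L1 = lintr L2.
Proof. by move=> eL; rewrite /lintr; congr (\tr _); apply/matrixP => i j; rewrite !mxE eL. Qed.

Lemma lintrD L1 L2 : lintr (fun x => L1 x + L2 x) = lintr L1 + lintr L2.
Proof. by rewrite /lintr -mxtraceD; congr (\tr _); apply/matrixP => i j; rewrite !mxE. Qed.

Lemma lintrZ a L : lintr (fun x => a *: L x) = a * lintr L.
Proof. by rewrite /lintr -mxtraceZ; congr (\tr _); apply/matrixP => i j; rewrite !mxE. Qed.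

Lemma lintrN L : lintr (fun x => - L x) = - lintr L.
Proof. by rewrite -mulN1r -lintrZ; apply: eq_lintr => x; rewrite scaleN1r. Qed.

Lemma lintrB L1 L2 : lintr (fun x => L1 x - L2 x) = lintr L1 - lintr L2.
Proof. by rewrite lintrD lintrN. Qed.

Lemma lintr0 : lintr (fun=> 0) = 0.
Proof. by rewrite -(mul0r (lintr id)) -lintrZ; apply: eq_lintr => x; rewrite scale0r. Qed.

Lemma row_lin1_mx L i : row i (lin1_mx L) = L (delta_mx 0 i).
Proof. by apply/rowP => j; rewrite !mxE. Qed.

Lemma lin1_mx_comp L1 L2 : linear L1 ->
  lin1_mx (fun x => L1 (L2 x)) = lin1_mx L2 *m lin1_mx L1.
Proof.
move=> hL1; apply/row_matrixP => i.
by rewrite row_mul !row_lin1_mx (mul_rV_lin1_fun hL1).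
Qed.

Lemma lintr_comp_comm L1 L2 : linear L1 -> linear L2 ->
  lintr (fun x => L1 (L2 x)) = lintr (fun x => L2 (L1 x)).
Proof.
by move=> h1 h2; rewrite /lintr (lin1_mx_comp L2 h1) (lin1_mx_comp L1 h2) mxtrace_mulC.
Qed.

End Trace.

Section Metric.
Variables (R : fieldType) (n : nat) (g : 'M[R]_n).
Hypotheses (gsym : g^T = g) (gunit : g \in unitmx).
Implicit Types (x y w : 'rV[R]_n).

Lemma ip_sym x y : ip g x y = ip g y x.
Proof.
rewrite /ip (_ : x *m g *m y^T = (y *m g *m x^T)^T) ?mxE //.
by rewrite !trmx_mul trmxK gsym mulmxA.
Qed.

Lemma ip0l y : ip g 0 y = 0. Proof. by rewrite /ip !mul0mx mxE. Qed.
Lemma ipDl x y w : ip g (x + y) w = ip g x w + ip g y w.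
Proof. by rewrite /ip !mulmxDl mxE. Qed.
Lemma ipZl a x w : ip g (a *: x) w = a * ip g x w.
Proof. by rewrite /ip -!scalemxAl mxE. Qed.
Lemma ipNl x w : ip g (- x) w = - ip g x w.
Proof. by rewrite /ip !mulNmx mxE. Qed.
Lemma ipBl x y w : ip g (x - y) w = ip g x w - ip g y w.
Proof. by rewrite ipDl ipNl. Qed.

Lemma ipDr x y w : ip g w (x + y) = ip g w x + ip g w y.
Proof. by rewrite /ip raddfD /= mulmxDr mxE. Qed.
Lemma ipZr a x w : ip g w (a *: x) = a * ip g w x.
Proof. by rewrite /ip linearZ /= -scalemxAr mxE. Qed.

Lemma ip_ev x i : ip g x (ev R i) = (x *m g) 0 i.
Proof. by rewrite /ip /ev trmx_delta -colE mxE. Qed.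

Lemma ev_mx_ev (A : 'M[R]_n) i j : (ev R i *m A *m (ev R j)^T) 0 0 = A i j.
Proof. by rewrite /ev trmx_delta -colE -rowE !mxE. Qed.

Lemma ipl_inj x y : ip g x =1 ip g y -> x = y.
Proof.
move=> exy; suff: x *m g = y *m g by move/(congr1 (mulmx^~ (invmx g))); rewrite !mulmxK.
by apply/rowP => i; rewrite -!ip_ev exy.
Qed.

Lemma eq_riesz f h : f =1 h -> riesz g f = riesz g h.
Proof. by move=> e; rewrite /riesz; congr (_ *m _); apply/rowP => i; rewrite !mxE e. Qed.

Lemma riesz_lincomb a f h :
  riesz g (fun w => a * f w + h w) = a *: riesz g f + riesz g h.
Proof. by rewrite /riesz scalemxAl -mulmxDl; congr (_ *m _); apply/rowP => i; rewrite !mxE. Qed.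

Lemma riesz0 : riesz g (fun=> 0) = 0.
Proof. by rewrite /riesz (_ : \row__ _ = 0) ?mul0mx //; apply/rowP => i; rewrite !mxE. Qed.

Lemma riesz_ip x : riesz g (ip g x) = x.
Proof.
rewrite /riesz -[X in _ = X](mulmxK gunit); congr (_ *m _).
by apply/rowP => i; rewrite mxE ip_ev.
Qed.

Lemma ip_riesz f y : scalar f -> ip g (riesz g f) y = f y.
Proof.
move=> hf; pose F : {scalar 'rV[R]_n} := HB.pack f (GRing.isLinear.Build R _ _ *%R f hf).
rewrite /ip /riesz -!mulmxA (mulmxA (invmx g)) mulVmx // mul1mx mxE.
rewrite -[f y]/(F y) {2}(row_sum_delta y) linear_sum.
by apply: eq_bigr => i _; rewrite linearZ !mxE mulrC.
Qed.

Lemma orthogonal_proj_exists (Z : 'M[R]_n) :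
  (forall z, (z <= Z)%MS -> (forall w, (w <= Z)%MS -> ip g z w = 0) -> z = 0) ->
  exists P : 'M[R]_n, forall x,
    (x *m P <= Z)%MS /\ (forall w, (w <= Z)%MS -> ip g (x - x *m P) w = 0).
Proof.
move=> Z_nondeg; set A := Z *m g *m Z^T.
have kerAZ : (kermx A <= kermx Z)%MS.
  apply/row_subP => i; set d := row i (kermx A).
  have dA : d *m A = 0 by apply/eqP; rewrite -sub_kermx row_sub.
  rewrite sub_kermx; apply/eqP/Z_nondeg; first exact: submxMl.
  move=> w /submxP [d' ->]; rewrite /ip trmx_mul !mulmxA.
  by rewrite -(mulmxA d) -(mulmxA d) -/A dA !mul0mx mxE.
have sAZ : (A <= Z^T)%MS by apply: submxMl.
have sZA : (Z^T <= A)%MS.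
  have := mxrankS kerAZ; rewrite !mxrank_ker leq_sub2lE ?rank_leq_row // => rZA.
  by rewrite -(mxrank_leqif_sup sAZ).2 eqn_leq (mxrankS sAZ) mxrank_tr rZA.
have [W defZ] := submxP sZA.
exists (g *m W *m Z) => x; split; first by rewrite mulmxA submxMl.
move=> w /submxP [d' ->].
have xP_perp : (x - x *m g *m W *m Z) *m g *m Z^T = 0.
  by rewrite !mulmxBl -!mulmxA (mulmxA Z g) -/A -defZ subrr.
by rewrite /ip trmx_mul !mulmxA xP_perp mul0mx mxE.
Qed.

End Metric.

Section SkewTrace.
Variables (R : numFieldType) (n : nat) (g : 'M[R]_n).
Hypothesis gunit : g \in unitmx.

Lemma lintr_skew L : linear L -> (forall x y, ip g (L x) y = - ip g x (L y)) ->
  lintr L = 0.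
Proof.
move=> hL skewL; set M := lin1_mx L.
have skewM : M *m g = - (g *m M^T).
  apply/matrixP => i j; have := skewL (ev R i) (ev R j).
  rewrite /ip -!(mul_rV_lin1_fun hL) trmx_mul !mulmxA -/M => skew_ij.
  by rewrite -ev_mx_ev -[RHS]ev_mx_ev mulmxN mulNmx !mulmxA skew_ij [RHS]mxE.
have trN : \tr M = - \tr M.
  rewrite -{1}(mulmxK gunit M) skewM mulNmx raddfN /= mxtrace_mulC mulmxA.
  by rewrite mulVmx // mul1mx mxtrace_tr.
by move/eqP: trN; rewrite -subr_eq0 opprK -mulr2n mulrn_eq0 => /eqP.
Qed.

End SkewTrace.

Ltac row_ring := apply/rowP => ?; rewrite !mxE; field; by rewrite ?pnatr_eq0.

Section TwoStepNilpotent.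
Variables (R : numFieldType) (n : nat) (g : 'M[R]_n).
Variable br : 'rV[R]_n -> 'rV[R]_n -> 'rV[R]_n.
Hypotheses (gsym : g^T = g) (gunit : g \in unitmx).
Hypothesis br_lin_l : forall a x y z, br (a *: x + y) z = a *: br x z + br y z.
Hypothesis br_anti : forall x y, br x y = - br y x.
Hypothesis br_br : forall x y z, br (br x y) z = 0.
Hypothesis z_nondeg : center_nondeg br g.
Implicit Types (a b c u w x y : 'rV[R]_n).

Lemma br_linear_l z : linear (br ^~ z).
Proof. by move=> a x y; rewrite br_lin_l. Qed.

Lemma br_linear_r z : linear (br z).
Proof. by move=> a x y; rewrite !(br_anti z) br_lin_l opprD scalerN. Qed.

Lemma center_br x y : center br (br x y).
Proof. by move=> z; apply: br_br. Qed.

Lemma br_center_r x c : center br c -> br x c = 0.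
Proof. by move=> hc; rewrite br_anti hc oppr0. Qed.

Lemma centerD c c' : center br c -> center br c' -> center br (c + c').
Proof. by move=> h h' x; rewrite (linear_funD (br_linear_l x)) h h' addr0. Qed.

Lemma centerZ k c : center br c -> center br (k *: c).
Proof. by move=> h x; rewrite (linear_funZ (br_linear_l x)) h scaler0. Qed.

Lemma centerB c c' : center br c -> center br c' -> center br (c - c').
Proof. by move=> h h'; rewrite -scaleN1r; apply/centerD/centerZ. Qed.

Lemma vpartB x y : vpart br g x -> vpart br g y -> vpart br g (x - y).
Proof. by move=> h h' c hc; rewrite ipBl h // h' // subr0. Qed.

Lemma center_vpart_eq0 c : center br c -> vpart br g c -> c = 0.
Proof. by move=> hc hv; apply: z_nondeg => // w hw; apply: hv. Qed.

Lemma center_ev z : center br z <-> forall i, br z (ev R i) = 0.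
Proof.
split=> [hz i | hz x]; first exact: hz.
have brz := br_linear_r z.
rewrite (row_sum_delta x); apply: (big_ind (fun y => br z y = 0)).
- exact: linear_fun0 brz.
- by move=> y y' hy hy'; rewrite (linear_funD brz) hy hy' addr0.
- by move=> i _; rewrite (linear_funZ brz) hz scaler0.
Qed.

Lemma center_kermx : exists Z : 'M[R]_n, forall z, center br z <-> (z <= Z)%MS.
Proof.
pose F z := mxvec (\matrix_i br z (ev R i)).
have linF : linear F.
  move=> a x y; rewrite /F -linearP /=; congr mxvec; apply/row_matrixP => i.
  by rewrite !rowK linearD linearZ /= !rowK br_lin_l.
exists (kermx (lin1_mx F)) => z.
rewrite sub_kermx (mul_rV_lin1_fun linF) mxvec_eq0.
apply: iff_trans (center_ev z) _; split=> [hz | /eqP hz i].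
- by apply/eqP/row_matrixP => i; rewrite rowK hz row0.
- by move/row_matrixP/(_ i): hz; rewrite rowK row0.
Qed.

Lemma center_proj_exists : exists P : 'M[R]_n,
  forall x, center br (x *m P) /\ vpart br g (x - x *m P).
Proof.
have [Z defZ] := center_kermx.
have [|P hP] := @orthogonal_proj_exists _ _ g Z.
  by move=> z /defZ hz hzZ; apply: z_nondeg => // w /defZ; apply: hzZ.
by exists P => x; have [/defZ hxP perp] := hP x; split=> // c /defZ; apply: perp.
Qed.

(* The paper's [j(a) b], defined here for all [a] and [b]. *)
Definition jmap a b := riesz g (fun w => ip g (br b w) a).

Lemma jmap_scalar a b : scalar (fun w => ip g (br b w) a).
Proof. by move=> k x y; rewrite br_linear_r ipDl ipZl. Qed.

Lemma ip_jmap a b w : ip g (jmap a b) w = ip g (br b w) a.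
Proof. exact: ip_riesz (jmap_scalar a b). Qed.

Lemma jmap_linear_l b : linear (jmap ^~ b).
Proof.
by move=> k x y; rewrite /jmap -riesz_lincomb; apply: eq_riesz => w; rewrite ipDr ipZr.
Qed.

Lemma jmap_linear_r a : linear (jmap a).
Proof.
move=> k x y; rewrite /jmap -riesz_lincomb; apply: eq_riesz => w.
by rewrite br_lin_l ipDl ipZl.
Qed.

Lemma jmap_vpart_l a b : vpart br g a -> jmap a b = 0.
Proof.
move=> ha; rewrite /jmap -(riesz0 g); apply: eq_riesz => w.
by rewrite (ip_sym gsym) ha //; apply: center_br.
Qed.

Lemma jmap_center_r a c : center br c -> jmap a c = 0.
Proof. by move=> hc; rewrite /jmap -(riesz0 g); apply: eq_riesz => w; rewrite hc ip0l. Qed.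

Lemma jmap_vpart a b : vpart br g (jmap a b).
Proof. by move=> c hc; rewrite ip_jmap br_center_r // ip0l. Qed.

Lemma jmap_skew c x y : ip g (jmap c x) y = - ip g x (jmap c y).
Proof. by rewrite ip_jmap (ip_sym gsym x) ip_jmap br_anti ipNl. Qed.

Lemma nablaE x y : nabla br g x y = 2^-1 *: (br x y - jmap x y - jmap y x).
Proof.
rewrite /nabla -[RHS](riesz_ip gunit); apply: eq_riesz => w.
rewrite ipZl !ipBl !ip_jmap (br_anti w x) ipNl.
by rewrite (ip_sym gsym (br x w)) (ip_sym gsym (br y w)).
Qed.

Lemma nabla_linear_l y : linear (nabla br g ^~ y).
Proof.
move=> k x x'; rewrite !nablaE br_lin_l (jmap_linear_r y) (jmap_linear_l y); row_ring.
Qed.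

Lemma nabla_linear_r x : linear (nabla br g x).
Proof.
move=> k y y'; rewrite !nablaE br_linear_r (jmap_linear_r x) (jmap_linear_l x); row_ring.
Qed.

Lemma nabla_center_r x c : center br c -> nabla br g x c = - 2^-1 *: jmap c x.
Proof. by move=> hc; rewrite nablaE br_center_r // (jmap_center_r x hc); row_ring. Qed.

Lemma nabla_center_l x c : center br c -> nabla br g c x = - 2^-1 *: jmap c x.
Proof. by move=> hc; rewrite nablaE hc (jmap_center_r x hc); row_ring. Qed.

Lemma nabla_vpart_r x b : vpart br g b -> nabla br g x b = 2^-1 *: (br x b - jmap x b).
Proof. by move=> hb; rewrite nablaE (jmap_vpart_l _ hb) subr0. Qed.

Lemma nabla_vpart a b : vpart br g a -> vpart br g b -> nabla br g a b = 2^-1 *: br a b.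
Proof. by move=> ha hb; rewrite nabla_vpart_r // jmap_vpart_l // subr0. Qed.

Lemma curv_vpart x u w : vpart br g u -> vpart br g w ->
  curv br g x u w = - 4^-1 *: jmap (br u w) x + 4^-1 *: br u (jmap x w)
    + 4^-1 *: jmap (br x w) u + 2^-1 *: jmap (br x u) w.
Proof.
move=> hu hw; have nx := nabla_linear_r x; have nu := nabla_linear_r u.
rewrite /curv (nabla_vpart hu hw) (linear_funZ nx) (nabla_center_r x (center_br u w)).
rewrite (nabla_vpart_r x hw) (linear_funZ nu) (linear_funB nu).
rewrite (nabla_center_r u (center_br x w)) (nabla_vpart hu (jmap_vpart x w)).
rewrite (nabla_center_l w (center_br x u)); row_ring.
Qed.

Lemma curv_vpart_center x u c : vpart br g u -> center br c ->
  curv br g x u c = - 4^-1 *: br x (jmap c u) + 4^-1 *: jmap x (jmap c u)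
    + 4^-1 *: br u (jmap c x).
Proof.
move=> hu hc; rewrite /curv (nabla_center_r u hc) (nabla_center_r x hc).
rewrite (nabla_center_r _ hc) (jmap_center_r c (center_br x u)).
rewrite (linear_funZ (nabla_linear_r x)) (nabla_vpart_r x (jmap_vpart c u)).
rewrite (linear_funZ (nabla_linear_r u)) (nabla_vpart hu (jmap_vpart c x)); row_ring.
Qed.

Lemma curv_center_vpart x c u : center br c -> vpart br g u ->
  curv br g x c u = - 4^-1 *: br x (jmap c u) + 4^-1 *: jmap x (jmap c u)
    - 4^-1 *: jmap c (jmap x u).
Proof.
move=> hc hu; have nc := nabla_linear_r c.
rewrite /curv (nabla_center_l u hc) (linear_funZ (nabla_linear_r x)).
rewrite (nabla_vpart_r x (jmap_vpart c u)) (nabla_vpart_r x hu).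
rewrite (linear_funZ nc) (linear_funB nc) (nabla_center_l _ hc) (nabla_center_l _ hc).
rewrite (jmap_center_r c (center_br x u)) (br_center_r x hc).
rewrite (linear_fun0 (nabla_linear_l u)); row_ring.
Qed.

Lemma ric_lintr u w : ric br g u w = lintr (fun x => curv br g x u w).
Proof. by rewrite /ric /lintr /mxtrace; apply: eq_bigr => i _; rewrite [RHS]mxE. Qed.

Lemma curv_linear_r x u : linear (curv br g x u).
Proof.
by move=> k w w'; rewrite /curv !(nabla_linear_r _); row_ring.
Qed.

Lemma curv_linear_m x w : linear (fun u => curv br g x u w).
Proof.
by move=> k u u'; rewrite /curv br_linear_r !(nabla_linear_l _) !(nabla_linear_r _); row_ring.
Qed.

Lemma ric_scalar_r u : scalar (ric br g u).
Proof.
move=> k w w'; rewrite !ric_lintr (eq_lintr (fun x => curv_linear_r x u k w w')).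
by rewrite lintrD lintrZ.
Qed.

Lemma ric_scalar_l w : scalar (ric br g ^~ w).
Proof.
move=> k u u'; rewrite /= !ric_lintr (eq_lintr (fun x => curv_linear_m x w k u u')).
by rewrite lintrD lintrZ.
Qed.

Lemma Rc_linear : linear (Rc br g).
Proof.
by move=> k u u'; rewrite /Rc -riesz_lincomb; apply: eq_riesz => w; apply: ric_scalar_l.
Qed.

Variable Pz : 'M[R]_n.
Hypothesis Pz_split : forall x, center br (x *m Pz) /\ vpart br g (x - x *m Pz).
Local Notation zp x := (x *m Pz).

Lemma center_zp x : center br (zp x). Proof. exact: (Pz_split x).1. Qed.
Lemma vpart_sub_zp x : vpart br g (x - zp x). Proof. exact: (Pz_split x).2. Qed.

Lemma zp_linear : linear (fun x : 'rV[R]_n => zp x).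
Proof. by move=> k x y; rewrite /= mulmxDl scalemxAl. Qed.

Lemma zp_center c : center br c -> zp c = c.
Proof.
move=> hc; apply/eqP; rewrite eq_sym -subr_eq0; apply/eqP.
by apply: center_vpart_eq0; [apply: centerB; [|apply: center_zp] | apply: vpart_sub_zp].
Qed.

Lemma zp_vpart x : vpart br g x -> zp x = 0.
Proof.
move=> hx; apply: center_vpart_eq0; first exact: center_zp.
have -> : zp x = x - (x - zp x) by rewrite opprB addrC subrK.
exact: vpartB (vpart_sub_zp x).
Qed.

Lemma ip_zp x c : center br c -> ip g (zp x) c = ip g x c.
Proof. by move=> hc; apply/eqP; rewrite eq_sym -subr_eq0 -ipBl vpart_sub_zp. Qed.

Lemma ip_split d y : ip g d y = ip g d (y - zp y) + ip g d (zp y).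
Proof. by rewrite -ipDr subrK. Qed.

Lemma jmap_zp a b : jmap a b = jmap (zp a) b.
Proof.
apply/eqP; rewrite -subr_eq0 -(linear_funB (jmap_linear_l b)).
by rewrite (jmap_vpart_l _ (vpart_sub_zp a)).
Qed.

Lemma br_split u w : br u w = br (u - zp u) (w - zp w).
Proof.
rewrite (linear_funB (br_linear_l _)) !(linear_funB (br_linear_r _)) center_zp.
by rewrite !(br_center_r _ (center_zp w)) !subr0.
Qed.

Lemma lintr_into_center L : linear L -> (forall x, center br (L x)) ->
  (forall c, center br c -> L c = 0) -> lintr L = 0.
Proof.
move=> linL Lz Lz0; have linQ : linear (fun x => x - zp x).
  by move=> k x y; rewrite zp_linear; row_ring.
rewrite (@eq_lintr _ _ L (fun x => L (x - zp x))); last first.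
  by move=> x /=; rewrite (linear_funB linL) (Lz0 _ (center_zp x)) subr0.
rewrite lintr_comp_comm // (eq_lintr (L2 := fun=> 0)) ?lintr0 // => x.
by rewrite zp_center ?subrr.
Qed.

Lemma lintr_into_vpart L : linear L -> (forall x, vpart br g (L x)) ->
  (forall a, vpart br g a -> L a = 0) -> lintr L = 0.
Proof.
move=> linL Lv Lv0; rewrite (@eq_lintr _ _ L (fun x => L (zp x))); last first.
  move=> x /=; rewrite -{1}(subrK (zp x) x) (linear_funD linL).
  by rewrite (Lv0 _ (vpart_sub_zp x)) add0r.
rewrite (lintr_comp_comm linL zp_linear) (eq_lintr (L2 := fun=> 0)) ?lintr0 // => x.
by rewrite zp_vpart.
Qed.

Lemma ric_vpart_center u c : vpart br g u -> center br c -> ric br g u c = 0.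
Proof.
move=> hu hc; rewrite ric_lintr (eq_lintr (fun x => curv_vpart_center x hu hc)).
rewrite !lintrD !lintrZ.
rewrite (lintr_into_center (br_linear_l _) (fun x => center_br x _)); last first.
  by move=> c' hc'; apply: hc'.
rewrite (lintr_into_vpart (jmap_linear_l _) (fun x => jmap_vpart x _)); last first.
  by move=> a ha; apply: jmap_vpart_l.
rewrite (lintr_into_center (linear_comp (br_linear_r u) (jmap_linear_r c))
  (fun x => center_br u _)); first by rewrite !mulr0 !addr0.
by move=> c' hc'; rewrite /= jmap_center_r // (linear_fun0 (br_linear_r u)).
Qed.

Lemma ric_center_vpart c u : center br c -> vpart br g u -> ric br g c u = 0.
Proof.
move=> hc hu; rewrite ric_lintr (eq_lintr (fun x => curv_center_vpart x hc hu)).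
rewrite lintrB lintrD !lintrZ.
rewrite (lintr_into_center (br_linear_l _) (fun x => center_br x _)); last first.
  by move=> c' hc'; apply: hc'.
rewrite (lintr_into_vpart (jmap_linear_l _) (fun x => jmap_vpart x _)); last first.
  by move=> a ha; apply: jmap_vpart_l.
rewrite (lintr_into_vpart (linear_comp (jmap_linear_r c) (jmap_linear_l u))
  (fun x => jmap_vpart c _)); first by rewrite !mulr0 subr0 addr0.
by move=> a ha; rewrite /= (jmap_vpart_l u ha) (linear_fun0 (jmap_linear_r c)).
Qed.

Definition tr_br_jmap u w := lintr (fun x => br u (jmap x w)).

Lemma lintr_jmap_br u w : lintr (fun x => jmap (br x w) u) = - tr_br_jmap w u.
Proof.
rewrite (lintr_comp_comm (jmap_linear_l u) (br_linear_l w)) -lintrN.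
by apply: eq_lintr => x; rewrite br_anti.
Qed.

Lemma ric_vpart_tr u w : vpart br g u -> vpart br g w ->
  ric br g u w = - 4^-1 * (tr_br_jmap u w + tr_br_jmap w u).
Proof.
move=> hu hw; rewrite ric_lintr (eq_lintr (fun x => curv_vpart x hu hw)).
rewrite !lintrD !lintrZ (lintr_skew gunit (jmap_linear_r _) (jmap_skew _)).
rewrite !lintr_jmap_br -/(tr_br_jmap u w); field; by rewrite ?pnatr_eq0.
Qed.

Lemma Rc_center c : center br c -> center br (Rc br g c).
Proof.
move=> hc; suff /eqP : Rc br g c - zp (Rc br g c) = 0.
  by rewrite subr_eq0 => /eqP ->; apply: center_zp.
apply: (ipl_inj gunit) => y; rewrite ip0l ip_split (vpart_sub_zp _ (center_zp y)).
rewrite addr0 ipBl /Rc (ip_riesz gunit _ (ric_scalar_r c)).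
rewrite (ric_center_vpart hc (vpart_sub_zp y)) (ip_sym gsym).
by rewrite (vpart_sub_zp y (center_zp _)) subrr.
Qed.

Section ModifiedHType.
Variables (Q : 'M[R]_n) (j : 'rV[R]_n -> 'rV[R]_n -> 'rV[R]_n).
Hypothesis j_adj : forall z x, center br z -> vpart br g x ->
  vpart br g (j z x) /\ (forall y, vpart br g y -> ip g (br x y) z = ip g y (j z x)).
Hypothesis j_sq : forall z x, center br z -> vpart br g x -> j z (j z x) = - qform Q z *: x.

Definition qpolar c c' : R := (c *m Q *m c'^T + c' *m Q *m c^T) 0 0.

Lemma qformD c c' : qform Q (c + c') = qform Q c + qform Q c' + qpolar c c'.
Proof. by rewrite /qform /qpolar raddfD /= !mulmxDl !mulmxDr !mxE; ring. Qed.

Lemma qpolar_scalar c : scalar (fun y => qpolar c (zp y)).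
Proof.
move=> k y y'; rewrite /qpolar zp_linear raddfD /= linearZ /= !mulmxDl !mulmxDr.
by rewrite -!scalemxAl -!scalemxAr !mxE; ring.
Qed.

Lemma jmap_eq_j c x : center br c -> vpart br g x -> jmap c x = j c x.
Proof.
move=> hc hx; have [jv jadj] := j_adj hc hx.
apply: (ipl_inj gunit) => y; rewrite (ip_split (jmap c x)) (ip_split (j c x)).
rewrite (jmap_vpart _ _ (center_zp y)) (jv _ (center_zp y)) ip_jmap.
by rewrite (jadj _ (vpart_sub_zp y)) (ip_sym gsym (j c x)).
Qed.

Lemma jmap_anticomm c c' w : center br c -> center br c' -> vpart br g w ->
  jmap c' (jmap c w) + jmap c (jmap c' w) = - qpolar c c' *: w.
Proof.
move=> hc hc' hw.
have jmap_sq d : center br d -> jmap d (jmap d w) = - qform Q d *: w.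
  by move=> hd; rewrite (jmap_eq_j hd hw) (jmap_eq_j hd (j_adj hd hw).1) j_sq.
have := jmap_sq _ (centerD hc hc').
rewrite !(linear_funD (jmap_linear_l _)) !(linear_funD (jmap_linear_r _)).
rewrite !jmap_sq // qformD => sq_sum.
move: (jmap c' (jmap c w)) (jmap c (jmap c' w)) sq_sum => A B /rowP sq_sum.
apply/rowP => i.
move/eqP: (sq_sum i); rewrite -subr_eq0 !mxE => /eqP {}sq_sum.
by apply/eqP; rewrite -subr_eq0 -sq_sum; apply/eqP; ring.
Qed.

Definition qdual x := zp (riesz g (fun y => qpolar (zp x) (zp y))).

Lemma ip_qdual x c : center br c -> ip g (qdual x) c = qpolar (zp x) c.
Proof. by move=> hc; rewrite ip_zp // (ip_riesz gunit _ (qpolar_scalar _)) (zp_center hc). Qed.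

Lemma br_jmap_sym x u w : vpart br g u -> vpart br g w ->
  br u (jmap x w) + br w (jmap x u) = ip g u w *: qdual x.
Proof.
move=> hu hw; apply/eqP; rewrite -subr_eq0; apply/eqP/center_vpart_eq0.
  by apply/centerB/centerZ/center_zp; apply/centerD; apply: center_br.
move=> c' hc'; rewrite ipBl ipDl ipZl ip_qdual // -!ip_jmap (jmap_zp x w) (jmap_zp x u).
rewrite (ip_sym gsym (jmap c' w)) !jmap_skew -opprD -ipDr.
by rewrite (jmap_anticomm (center_zp x) hc' hw) ipZr; ring.
Qed.

Definition ric_v := - 4^-1 * lintr qdual.

Lemma ric_vpart u w : vpart br g u -> vpart br g w -> ric br g u w = ric_v * ip g u w.
Proof.
move=> hu hw; rewrite ric_vpart_tr // /tr_br_jmap -lintrD.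
by rewrite (eq_lintr (fun x => br_jmap_sym x hu hw)) lintrZ /ric_v; ring.
Qed.

Lemma Rc_vpart x : vpart br g x -> Rc br g x = ric_v *: x.
Proof.
move=> hx; apply: (ipl_inj gunit) => y.
rewrite /Rc (ip_riesz gunit _ (ric_scalar_r x)) ipZl (ip_split x y) (hx _ (center_zp y)).
have -> : ric br g x y = ric br g x (y - zp y) + ric br g x (zp y).
  by rewrite -[X in X + _]mul1r -ric_scalar_r scale1r subrK.
by rewrite (ric_vpart hx (vpart_sub_zp y)) (ric_vpart_center hx (center_zp y)) !addr0.
Qed.

Lemma br_Rc_shift k u w : br (Rc br g u + k *: u) w = (ric_v + k) *: br u w.
Proof.
have Rc_u : Rc br g u = ric_v *: (u - zp u) + Rc br g (zp u).
  by rewrite -(Rc_vpart (vpart_sub_zp u)) -(linear_funD Rc_linear) subrK.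
rewrite Rc_u -addrA [Rc _ _ _ + _]addrC !br_lin_l (Rc_center (center_zp u)) addr0.
by rewrite (linear_funB (br_linear_l w)) (center_zp u) subr0 scalerDl.
Qed.

Lemma derivation_Rc_shift k :
  derivation br (fun u => Rc br g u + k *: u) <->
  forall x y, vpart br g x -> vpart br g y -> Rc br g (br x y) = (2 * ric_v + k) *: br x y.
Proof.
have br_D u w : br (Rc br g u + k *: u) w + br u (Rc br g w + k *: w) =
    (2 * (ric_v + k)) *: br u w.
  rewrite (br_anti u (_ + _)) !br_Rc_shift (br_anti w) scalerN opprK -scalerDl.
  by congr (_ *: _); ring.
split=> [D_der x y _ _ | Rc_br u w].
  move: (D_der x y); rewrite /= br_D => /(canRL (addrK _)).
  by rewrite -scalerBl => ->; congr (_ *: _); ring.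
rewrite /= br_D br_split (Rc_br _ _ (vpart_sub_zp u) (vpart_sub_zp w)) -scalerDl.
by congr (_ *: _); ring.
Qed.

End ModifiedHType.
End TwoStepNilpotent.

Theorem theorem4p10 (R : realType) (n : nat)
    (br : 'rV[R]_n -> 'rV[R]_n -> 'rV[R]_n) (g Q : 'M[R]_n)
    (j : 'rV[R]_n -> 'rV[R]_n -> 'rV[R]_n) :
  two_step_nilpotent br ->
  g^T = g -> g \in unitmx ->
  center_nondeg br g ->
  (* j(z) in End(v) defined by <[x,y],z> = <y, j(z)x> for x, y in v *)
  (forall z x, center br z -> vpart br g x ->
     vpart br g (j z x) /\
     (forall y, vpart br g y -> ip g (br x y) z = ip g y (j z x))) ->
  (* modified H-type: j(z)^2 = - phi(z) Id_v *)
  (forall z x, center br z -> vpart br g x -> j z (j z x) = - qform Q z *: x) ->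
  (nilsoliton br g <->
   exists lam : R, forall x y, vpart br g x -> vpart br g y ->
     Rc br g (br x y) = lam *: br x y).
Proof.
move=> [br_lin_l br_anti br_br _] gsym gunit z_nondeg j_adj j_sq.
have [Pz Pz_split] := center_proj_exists br_lin_l br_anti z_nondeg.
have shift := derivation_Rc_shift gsym gunit br_lin_l br_anti br_br z_nondeg
  Pz_split j_adj j_sq.
set lam_v := ric_v _ _ _ in shift.
split=> [[k /shift Rc_br] | [lam Rc_br]]; first by exists (2 * lam_v + k).
exists (lam - 2 * lam_v); apply/shift => x y hx hy.
by rewrite Rc_br // addrCA subrr addr0.
Qed.
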